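(* For each finite alphabet $\Sigma$, let $\mathcal{FV}(\Sigma)$ denote the class of regular languages $L\subseteq\Sigma^*$ having finite variation. Then $\mathcal{FV}$ is a $*$-variety of Eilenberg: for every finite alphabet $\Sigma$, $\mathcal{FV}(\Sigma)$ is closed under the boolean operations (union, intersection, complement in $\Sigma^*$), under left and right quotients by words ($L\mapsto u^{-1}L=\{x: ux\in L\}$ and $L\mapsto Lu^{-1}=\{x: xu\in L\}$ for $u\in\Sigma^*$), and for every monoid homomorphism $h:\Gamma^*\to\Sigma^*$ between free monoids over finite alphabets and every $L\in\mathcal{FV}(\Sigma)$, $h^{-1}(L)\in\mathcal{FV}(\Gamma)$.
   Context: Let $L\subseteq\Sigma^*$ be regular and let $\langle\Sigma,Q,\delta,q_0,F\rangle$ be the minimal deterministic automaton recognizing $L$; write $\delta(u)$ for the state reached from $q_0$ after reading $u\in\Sigma^*$. For $w=\sigma_1\cdots\sigma_n\in\Sigma^*$, its variation is $\mathrm{Var}_L(w)=\#\{0\le k<n : \delta(\sigma_1\cdots\sigma_k)\neq\delta(\sigma_1\cdots\sigma_{k+1})\}$. $L$ has finite variation iff $\sup_{x\in\Sigma^*}\mathrm{Var}_L(x)<\infty$. *)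

From mathcomp Require Import all_boot all_order.
From mathcomp Require Import boolp.
Set Implicit Arguments. Unset Strict Implicit. Unset Printing Implicit Defensive.

Definition lang (S : finType) := seq S -> bool.

Record dfa (S : finType) := DFA {
  dfa_state : finType;
  dfa_init : dfa_state;
  dfa_trans : dfa_state -> S -> dfa_state;
  dfa_final : pred dfa_state }.

Definition dfa_run (S : finType) (A : dfa S) (q : dfa_state A) (w : seq S) :=
  foldl (@dfa_trans S A) q w.

Definition dfa_accept (S : finType) (A : dfa S) (w : seq S) : bool :=
  @dfa_final S A (@dfa_run S A (@dfa_init S A) w).

Definition regular (S : finType) (L : lang S) : Prop :=
  exists A : dfa S, forall w, L w = dfa_accept A w.

(* The state of the minimal automaton reached after reading u is (identified
   with) the residual u^{-1}L; two prefixes lead to the same state iff their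
   residuals coincide. *)
Definition residual (S : finType) (L : lang S) (u : seq S) : lang S :=
  fun x => L (u ++ x).

Definition same_state (S : finType) (L : lang S) (u v : seq S) : Prop :=
  forall z, residual L u z = residual L v z.

Definition Var (S : finType) (L : lang S) (w : seq S) : nat :=
  count (fun k => `[< ~ same_state L (take k w) (take k.+1 w) >])
        (iota 0 (size w)).

Definition finite_variation (S : finType) (L : lang S) : Prop :=
  exists B : nat, forall x : seq S, Var L x <= B.

Definition FV (S : finType) (L : lang S) : Prop :=
  regular L /\ finite_variation L.

Definition lunion (S : finType) (L1 L2 : lang S) : lang S := fun w => L1 w || L2 w.
Definition linter (S : finType) (L1 L2 : lang S) : lang S := fun w => L1 w && L2 w.
Definition lcompl (S : finType) (L : lang S) : lang S := fun w => ~~ L w.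
Definition lquot (S : finType) (u : seq S) (L : lang S) : lang S := fun x => L (u ++ x).
Definition rquot (S : finType) (L : lang S) (u : seq S) : lang S := fun x => L (x ++ u).
Definition lpreim (G S : finType) (h : seq G -> seq S) (L : lang S) : lang G :=
  fun x => L (h x).

Definition monoid_hom (G S : finType) (h : seq G -> seq S) : Prop :=
  h [::] = [::] /\ forall x y, h (x ++ y) = h x ++ h y.

From mathcomp Require Import all_boot all_order.
From mathcomp Require Import boolp.
Set Implicit Arguments. Unset Strict Implicit. Unset Printing Implicit Defensive.

(* Regularity is preserved by the usual automaton constructions.  For the
   variation, note that Var L w counts the letters of w at which the residual
   of L changes.  For boolean combinations and right quotients, the residual
   of the new language only changes where a residual of the old ones does.
   For a left quotient or an inverse morphism, reading one letter of w
   amounts to reading a factor of the image of w in the old language, and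
   the residual can only change across that factor if it changes at one of
   its letters. *)

Definition state_change (S : finType) (L : lang S) (x y : seq S) : bool :=
  `[< ~ same_state L x y >].

Section Variation.
Variable S : finType.
Implicit Types (L : lang S) (w x y z : seq S).

Lemma same_state_refl L x : same_state L x x.
Proof. by []. Qed.

Lemma same_state_trans L x y z :
  same_state L x y -> same_state L y z -> same_state L x z.
Proof. by move=> Hxy Hyz t; rewrite Hxy Hyz. Qed.

Lemma Var_rcons L w a : Var L (rcons w a) = Var L w + state_change L w (rcons w a).
Proof.
rewrite /Var size_rcons -addn1 iotaD count_cat /= addn0 add0n; congr (_ + _).
  apply: eq_in_count => k; rewrite mem_iota add0n => /= lt_k_w.
  by rewrite -cats1 !takel_cat // ltnW.
by rewrite -cats1 take_size_cat // take_oversize // size_cat addn1.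
Qed.

Lemma state_change_triangle L x y z :
  state_change L x z <= state_change L x y + state_change L y z.
Proof.
rewrite /state_change; case: asboolP => [nxz|//].
case: asboolP => [//|/contrapT Hxy]; case: asboolP => [//|/contrapT Hyz].
by case: (nxz (same_state_trans Hxy Hyz)).
Qed.

Lemma Var_cat L x v : Var L x + state_change L x (x ++ v) <= Var L (x ++ v).
Proof.
elim/last_ind: v => [|v b IH].
  rewrite cats0 /state_change; case: asboolP => [nxx|_]; last by rewrite addn0.
  by case: (nxx (same_state_refl L x)).
rewrite -rcons_cat Var_rcons; apply: leq_trans (leq_add IH (leqnn _)).
by rewrite -addnA leq_add2l state_change_triangle.
Qed.

Lemma Var_refine L L' w :
  (forall x y, same_state L x y -> same_state L' x y) -> Var L' w <= Var L w.
Proof.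
move=> refL; elim/last_ind: w => [//|w a IH].
rewrite !Var_rcons leq_add // /state_change.
case: asboolP => [nL'|//]; case: asboolP => [//|/contrapT HL].
by case: (nL' (refL _ _ HL)).
Qed.

Lemma Var_refine2 L1 L2 L' w :
  (forall x y, same_state L1 x y -> same_state L2 x y -> same_state L' x y) ->
  Var L' w <= Var L1 w + Var L2 w.
Proof.
move=> refL; elim/last_ind: w => [//|w a IH].
rewrite !Var_rcons addnACA leq_add // /state_change.
case: asboolP => [nL'|//].
case: asboolP => [//|/contrapT H1]; case: asboolP => [//|/contrapT H2].
by case: (nL' (refL _ _ H1 H2)).
Qed.

End Variation.

(* The hypothesis on [phi] says that [phi] acts as a sequential transducer
   with output function [h]; both [lquot u] and [lpreim h] are of this form. *)
Lemma Var_transduce (G S : finType) (phi h : seq G -> seq S) (L : lang S) w :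
  (forall x z, phi (x ++ z) = phi x ++ h z) ->
  Var (fun x => L (phi x)) w <= Var L (phi w).
Proof.
move=> phi_cat; elim/last_ind: w => [//|w a IH].
rewrite Var_rcons -cats1 phi_cat; apply: leq_trans (Var_cat _ _ _).
rewrite leq_add // /state_change.
case: asboolP => [nL'|//]; case: asboolP => [//|/contrapT HL].
by case: nL' => z; rewrite /residual !phi_cat; exact: HL.
Qed.

Section Regular.
Variable S : finType.

Definition dfa_prod (A B : dfa S) (f : bool -> bool -> bool) : dfa S :=
  @DFA S (dfa_state A * dfa_state B)%type (dfa_init A, dfa_init B)
    (fun q a => (dfa_trans q.1 a, dfa_trans q.2 a))
    (fun q => f (dfa_final q.1) (dfa_final q.2)).

Lemma dfa_run_prod (A B : dfa S) f q w :
  @dfa_run S (dfa_prod A B f) q w = (dfa_run q.1 w, dfa_run q.2 w).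
Proof. by elim: w q => [|a w IH] [q1 q2] //=; rewrite /dfa_run /= -/dfa_run IH. Qed.

Lemma regular_binop (L1 L2 : lang S) f :
  regular L1 -> regular L2 -> regular (fun w => f (L1 w) (L2 w)).
Proof.
move=> [A HA] [B HB]; exists (dfa_prod A B f) => w.
by rewrite /dfa_accept dfa_run_prod HA HB.
Qed.

Lemma regular_lcompl (L : lang S) : regular L -> regular (lcompl L).
Proof.
move=> [A HA].
by exists (DFA (dfa_init A) (@dfa_trans S A) (fun q => ~~ dfa_final q)) => w;
  rewrite /lcompl HA.
Qed.

Lemma regular_lquot (L : lang S) u : regular L -> regular (lquot u L).
Proof.
move=> [A HA].
exists (DFA (dfa_run (dfa_init A) u) (@dfa_trans S A) (@dfa_final S A)) => w.
by rewrite /lquot HA /dfa_accept /dfa_run foldl_cat.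
Qed.

Lemma regular_rquot (L : lang S) u : regular L -> regular (rquot L u).
Proof.
move=> [A HA].
exists (DFA (dfa_init A) (@dfa_trans S A) (fun q => dfa_final (dfa_run q u))) => w.
by rewrite /rquot HA /dfa_accept /dfa_run foldl_cat.
Qed.

End Regular.

Lemma regular_lpreim (G S : finType) (h : seq G -> seq S) (L : lang S) :
  monoid_hom h -> regular L -> regular (lpreim h L).
Proof.
move=> [h0 h_cat] [A HA].
pose B := DFA (dfa_init A) (fun q g => dfa_run q (h [:: g])) (@dfa_final S A).
have run_B q w : @dfa_run G B q w = @dfa_run S A q (h w).
  elim: w q => [|g w IH] q; first by rewrite h0.
  by rewrite -cat1s h_cat /dfa_run !foldl_cat; exact: IH.
by exists B => w; rewrite /lpreim HA /dfa_accept run_B.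
Qed.

Section FiniteVariation.
Variable S : finType.
Implicit Types (L : lang S) (u : seq S).

Lemma FV_binop L1 L2 f : FV L1 -> FV L2 -> FV (fun w => f (L1 w) (L2 w)).
Proof.
move=> [R1 [B1 V1]] [R2 [B2 V2]]; split; first exact: regular_binop.
exists (B1 + B2) => x; apply: leq_trans (leq_add (V1 x) (V2 x)).
by apply: Var_refine2 => y z H1 H2 t; move: (H1 t) (H2 t); rewrite /residual => -> ->.
Qed.

Lemma FV_lcompl L : FV L -> FV (lcompl L).
Proof.
move=> [R [B V]]; split; first exact: regular_lcompl.
exists B => x; apply: leq_trans (V x).
by apply: Var_refine => y z H t; move: (H t); rewrite /residual /lcompl => ->.
Qed.

Lemma FV_lquot L u : FV L -> FV (lquot u L).
Proof.
move=> [R [B V]]; split; first exact: regular_lquot.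
exists B => x; apply: leq_trans (V (u ++ x)).
by apply: (Var_transduce (phi := cat u) (h := id)) => y z; rewrite catA.
Qed.

Lemma FV_rquot L u : FV L -> FV (rquot L u).
Proof.
move=> [R [B V]]; split; first exact: regular_rquot.
exists B => x; apply: leq_trans (V x).
by apply: Var_refine => y z H t; move: (H (t ++ u)); rewrite /residual /rquot -!catA.
Qed.

End FiniteVariation.

Lemma FV_lpreim (G S : finType) (h : seq G -> seq S) (L : lang S) :
  monoid_hom h -> FV L -> FV (lpreim h L).
Proof.
move=> hom_h [R [B V]]; split; first exact: regular_lpreim.
exists B => x; apply: leq_trans (V (h x)).
by apply: Var_transduce; case: hom_h.
Qed.

Theorem mainTheorem1 :
  (forall (S : finType) (L1 L2 : lang S),
      FV L1 -> FV L2 -> FV (lunion L1 L2) /\ FV (linter L1 L2)) /\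
  (forall (S : finType) (L : lang S), FV L -> FV (lcompl L)) /\
  (forall (S : finType) (L : lang S) (u : seq S),
      FV L -> FV (lquot u L) /\ FV (rquot L u)) /\
  (forall (G S : finType) (h : seq G -> seq S) (L : lang S),
      monoid_hom h -> FV L -> FV (lpreim h L)).
Proof.
split; [|split; [|split]].
- by move=> S L1 L2 FV1 FV2; split; exact: FV_binop.
- exact: FV_lcompl.
- by move=> S L u FVL; split; [exact: FV_lquot | exact: FV_rquot].
- exact: FV_lpreim.
Qed.
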